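(* Let $G$ be a graph with vertex set $[n]$. Then the set $\mathrm{FPF}(G)$ of $G$-friendship parking functions is non-empty if and only if $G$ contains a Hamiltonian path.
   Context: $[n]=\{1,\dots,n\}$. A parking preference is a vector $p=(p_1,\dots,p_n)\in[n]^n$; $p_i$ is the preferred spot of car $i$ in a one-way street with spots $1,\dots,n$. Friendship parking process for a graph $G$ on vertex set $[n]$: cars $1,\dots,n$ enter in this order, all spots initially unoccupied. A spot $k$ is available for car $i$ if it is unoccupied when car $i$ enters, and each of the neighbouring spots $k-1$ and $k+1$ is either unoccupied or occupied by a car $j$ that is adjacent to $i$ in $G$ (spots $0$ and $n+1$ are considered unoccupied). Car $i$ parks in the first spot $k\ge p_i$ that is available for it; if none exists, car $i$ fails to park. $p$ is a $G$-friendship parking function if all $n$ cars park; $\mathrm{FPF}(G)$ denotes the set of these. A Hamiltonian path of $G$ is a sequence of all $n$ distinct vertices $(v_1,\dots,v_n)$ with $\{v_k,v_{k+1}\}$ an edge of $G$ for all $k\in[n-1]$. *)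

From mathcomp Require Import all_boot.
Set Implicit Arguments. Unset Strict Implicit. Unset Printing Implicit Defensive.

(* Conventions: vertices/cars [n] are encoded as 'I_n (car i+1 <-> ordinal i);
   spots are natural numbers 1..n (spot 0 and n+1 always unoccupied).
   A parking preference p in [n]^n is a finite function p : {ffun 'I_n -> 'I_n},
   car (i+1) preferring spot (p i).+1. *)

Definition simple_graph n (G : rel 'I_n) : Prop :=
  irreflexive G /\ symmetric G.

Definition state n := nat -> option 'I_n.

Definition empty_state n : state n := fun _ => None.

Definition nbr_ok n (G : rel 'I_n) (s : state n) (c : 'I_n) (j : nat) : bool :=
  match s j with None => true | Some d => G c d end.

Definition available n (G : rel 'I_n) (s : state n) (c : 'I_n) (k : nat) : bool :=
  [&& 1 <= k <= n, s k == None, nbr_ok G s c k.-1 & nbr_ok G s c k.+1].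

(* Spot 0 must count as unoccupied for k = 1: states only ever occupy spots
   in 1..n, so s 0 = None; spot n+1 likewise. *)

Definition park_spot n (G : rel 'I_n) (s : state n) (c : 'I_n) (pref : nat)
  : option nat :=
  let cands := [seq k <- iota pref (n.+1 - pref) | available G s c k] in
  ohead cands.

Definition occupy n (s : state n) (k : nat) (c : 'I_n) : state n :=
  fun j => if j == k then Some c else s j.

Fixpoint run n (G : rel 'I_n) (p : {ffun 'I_n -> 'I_n}) (cars : seq 'I_n)
  (s : state n) : option (state n) :=
  match cars with
  | [::] => Some s
  | c :: cs =>
      match park_spot G s c (p c).+1 with
      | None => None
      | Some k => run G p cs (occupy s k c)
      end
  end.

Definition is_FPF n (G : rel 'I_n) (p : {ffun 'I_n -> 'I_n}) : bool :=
  isSome (run G p (enum 'I_n) (empty_state n)).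

Definition FPF n (G : rel 'I_n) : {set {ffun 'I_n -> 'I_n}} :=
  [set p | is_FPF G p].

Definition hamiltonian_path n (G : rel 'I_n) (s : seq 'I_n) : bool :=
  [&& uniq s, size s == n & sorted G s].

Definition has_hamiltonian_path n (G : rel 'I_n) : Prop :=
  exists s : seq 'I_n, hamiltonian_path G s.

From mathcomp Require Import all_boot.
Set Implicit Arguments. Unset Strict Implicit. Unset Printing Implicit Defensive.

(* (=>) Along any successful run the state stays "consistent": only spots
   1..n are occupied, and two cars in adjacent spots are G-adjacent (a car
   only parks next to friends, and G is symmetric).  When all n cars have
   parked, every spot 1..n is occupied by a distinct car, so reading the
   street from left to right, [pmap s (iota 1 n)], is a Hamiltonian path.

   (<=) Given a Hamiltonian path [sq], let every car prefer its own position
   in [sq].  Inductively, every occupied spot holds the car that the path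
   puts there, and that car has already entered; hence the preferred spot of
   the next car is free and its neighbours are free or hold path-neighbours,
   so the car parks exactly there. *)

Section ReadInterval.
Variables (T : Type) (e : rel T) (f : nat -> option T).
Hypothesis f_adj : forall j x y, f j = Some x -> f j.+1 = Some y -> e x y.

Lemma path_pmap_iota l m x : f m = Some x ->
  (forall j, m < j <= m + l -> f j) -> path e x (pmap f (iota m.+1 l)).
Proof.
elim: l m x => [|l IHl] m x fm f_def //=.
case fm1: (f m.+1) => [y|]; last first.
  by move: (f_def m.+1); rewrite fm1 ltnSn addnS ltnS leq_addr => /(_ isT).
rewrite /= (f_adj fm fm1); apply: IHl fm1 _ => j /andP[lt_j le_j].
by apply: f_def; rewrite (ltn_trans _ lt_j) //= -addSnnS.
Qed.

Lemma sorted_pmap_iota N : (forall j, 0 < j <= N -> f j) ->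
  sorted e (pmap f (iota 1 N)).
Proof.
case: N => [|N] f_def //=.
case f1: (f 1) => [x|]; last by move: (f_def 1); rewrite f1 => /(_ isT).
by apply: (path_pmap_iota f1) => j /andP[lt_j le_j]; rewrite f_def ?(leq_trans _ lt_j).
Qed.

End ReadInterval.

Section Run.
Variables (n : nat) (G : rel 'I_n) (p : {ffun 'I_n -> 'I_n}).

Lemma park_spot_available (s : state n) c pref k :
  park_spot G s c pref = Some k -> available G s c k.
Proof.
rewrite /park_spot; case E: [seq _ <- _ | _] => [|x l] //= [<-].
have : x \in [seq k <- iota pref (n.+1 - pref) | available G s c k].
  by rewrite E mem_head.
by rewrite mem_filter => /andP[].
Qed.

Lemma run_keeps_parked cs (s s' : state n) :
  run G p cs s = Some s' -> forall j d, s j = Some d -> s' j = Some d.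
Proof.
elim: cs s => [|c cs IHcs] s /=; first by case=> ->.
case E: park_spot => [k|] // /IHcs keep j d sj; apply: keep.
rewrite /occupy; case: eqP => [jk|//]; subst j.
by case/and4P: (park_spot_available E) => _ /eqP skN _ _; rewrite skN in sj.
Qed.

Lemma run_parks_all cs (s s' : state n) :
  run G p cs s = Some s' -> forall d, d \in cs -> exists j, s' j = Some d.
Proof.
elim: cs s => [|c cs IHcs] s //=.
case E: park_spot => [k|] // R d; rewrite inE => /predU1P[->|]; last exact: IHcs R d.
by exists k; apply: (run_keeps_parked R); rewrite /occupy eqxx.
Qed.

Definition consistent (s : state n) :=
  (forall j d, s j = Some d -> 1 <= j <= n) /\
  (forall j d e, s j = Some d -> s j.+1 = Some e -> G d e).

Lemma consistent_empty : consistent (empty_state n).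
Proof. by split. Qed.

Lemma run_consistent cs (s s' : state n) : symmetric G ->
  run G p cs s = Some s' -> consistent s -> consistent s'.
Proof.
move=> symG; elim: cs s => [|c cs IHcs] s /=; first by case=> <-.
case E: park_spot => [k|] // R [in_street friends]; apply: (IHcs _ R).
case/and4P: (park_spot_available E) => kn /eqP skN ok_left ok_right.
rewrite /occupy; split=> [j d|j d e].
  by case: eqP => [->//|_]; apply: in_street.
case: (eqVneq j k) => [->|jk].
  by rewrite /= (gtn_eqF (ltnSn k)) => -[<-] sk; move: ok_right; rewrite /nbr_ok sk.
case: (eqVneq j.+1 k) => [jk'|_]; last exact: friends.
by move=> sj [<-]; move: ok_left; rewrite /nbr_ok -jk' /= sj symG.
Qed.

End Run.

Lemma final_state_hamiltonian n (G : rel 'I_n) (s : state n) :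
  consistent G s -> (forall d, exists j, s j = Some d) ->
  hamiltonian_path G (pmap s (iota 1 n)).
Proof.
move=> [in_street friends] all_parked; set sq := pmap s (iota 1 n).
have sub : {subset enum 'I_n <= sq}.
  move=> d _; have [j sj] := all_parked d; rewrite mem_pmap; apply/mapP.
  by exists j => //; rewrite mem_iota add1n ltnS (in_street _ _ sj).
have size_le : size sq <= n.
  by rewrite size_pmap (leq_trans (count_size _ _)) ?size_iota.
have uniq_sq : uniq sq.
  by apply: (leq_size_uniq (enum_uniq _) sub); rewrite size_enum_ord.
have size_sq : size sq = n.
  apply/eqP; rewrite eqn_leq size_le -[X in X <= _](size_enum_ord n).
  by rewrite uniq_leq_size // enum_uniq.
have full : forall j, 0 < j <= n -> s j.
  have : all (fun j => s j) (iota 1 n).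
    by rewrite all_count size_iota -[X in _ == X]size_sq size_pmap.
  by move/allP=> A j hj; apply: A; rewrite mem_iota add1n ltnS.
by rewrite /hamiltonian_path uniq_sq size_sq eqxx (sorted_pmap_iota friends full).
Qed.

Lemma fpf_hamiltonian n (G : rel 'I_n) (p : {ffun 'I_n -> 'I_n}) :
  symmetric G -> is_FPF G p -> has_hamiltonian_path G.
Proof.
move=> symG; rewrite /is_FPF; case R: run => [s|] // _.
exists (pmap s (iota 1 n)); apply: final_state_hamiltonian.
  exact: run_consistent symG R (consistent_empty G).
by move=> d; apply: (run_parks_all R); rewrite mem_enum.
Qed.

Section PathPreference.
Variables (n : nat) (G : rel 'I_n) (sq : seq 'I_n).
Hypothesis symG : symmetric G.
Hypothesis ham : hamiltonian_path G sq.

Let uniq_sq : uniq sq. Proof. by case/and3P: ham. Qed.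
Let size_sq : size sq = n. Proof. by case/and3P: ham => _ /eqP. Qed.

Lemma path_covers c : c \in sq.
Proof.
have hs : size (enum 'I_n) <= size sq by rewrite size_enum_ord size_sq.
by have [_ ->] := uniq_min_size uniq_sq (fun x _ => mem_enum _ x) hs; rewrite mem_enum.
Qed.

Lemma index_lt c : index c sq < n.
Proof. by rewrite -[X in _ < X]size_sq index_mem path_covers. Qed.

Lemma path_friends x i a b :
  i.+1 < n -> nth x sq i = a -> nth x sq i.+1 = b -> G a b.
Proof.
case/and3P: ham => _ _ /(sortedP x) srt lt_i <- <-.
by apply: srt; rewrite size_sq.
Qed.

Definition path_pref : {ffun 'I_n -> 'I_n} := [ffun c => insubd c (index c sq)].

Lemma path_pref_spot c : (path_pref c).+1 = (index c sq).+1.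
Proof. by rewrite ffunE val_insubd index_lt. Qed.

Definition follows_path (s : state n) (waiting : seq 'I_n) :=
  forall j d, s j = Some d -> [/\ 0 < j <= n, index d sq = j.-1 & d \notin waiting].

Lemma path_spot_available (s : state n) c cs :
  follows_path s (c :: cs) -> available G s c (index c sq).+1.
Proof.
move=> inv; rewrite /available index_lt /=; apply/and3P; split.
- case E: (s _) => [d|] //; case: (inv _ _ E) => _ /= hd.
  have -> : d = c by rewrite -(nth_index c (path_covers d)) hd nth_index ?path_covers.
  by rewrite mem_head.
- rewrite /nbr_ok /=; case E: (s _) => [d|] //; case: (inv _ _ E) => /andP[j_pos _] hd _.
  rewrite symG; apply: (path_friends (x := c) (i := (index c sq).-1)).
  + by rewrite prednK // index_lt.
  + by rewrite -hd nth_index ?path_covers.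
  + by rewrite prednK // nth_index ?path_covers.
- rewrite /nbr_ok /=; case E: (s _) => [d|] //; case: (inv _ _ E) => /andP[_ j_le] /= hd _.
  apply: (path_friends (x := c) (i := index c sq)) => //.
  + by rewrite nth_index ?path_covers.
  + by rewrite -hd nth_index ?path_covers.
Qed.

Lemma path_pref_parks cs (s : state n) :
  uniq cs -> follows_path s cs -> isSome (run G path_pref cs s).
Proof.
elim: cs s => [|c cs IHcs] s //= /andP[c_notin uniq_cs] inv.
have -> : park_spot G s c (path_pref c).+1 = Some (index c sq).+1.
  rewrite /park_spot path_pref_spot subSn ?index_lt //=.
  by rewrite (path_spot_available inv).
apply: IHcs => // j d; rewrite /occupy.
case: eqP => [-> [<-]|_ /inv[j_in hd]]; first by rewrite index_lt.
by rewrite inE negb_or => /andP[].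
Qed.

Lemma path_pref_FPF : is_FPF G path_pref.
Proof. by apply: path_pref_parks; [exact: enum_uniq | move=> j d]. Qed.

End PathPreference.

Theorem proposition2p1 (n : nat) (G : rel 'I_n) :
  simple_graph G ->
  (FPF G != set0) <-> has_hamiltonian_path G.
Proof.
move=> [_ symG]; split.
  by case/set0Pn=> p; rewrite inE; apply: fpf_hamiltonian.
case=> sq ham; apply/set0Pn; exists (path_pref sq).
by rewrite inE; apply: path_pref_FPF.
Qed.
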